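(* Let $f\in\mathcal{S}(\Omega)$. (1) $\{y^c: y\in V(N(f^c))\}\supseteq V(f)$. (2) If $f'_s(x)\in C_A$ for every $x\in\Omega\setminus\mathbb{R}$, then for every $x\in\Omega$ the sets $\mathbb{S}_x\cap V(f)$ and $\mathbb{S}_x\cap V(f^c)$ are both empty, both singletons, or both equal to $\mathbb{S}_x$. Moreover, \[V(N(f))\supseteq\bigcup_{x\in V(f)}\mathbb{S}_x=\bigcup_{x\in V(f^c)}\mathbb{S}_x\subseteq V(N(f^c)).\] If, additionally, $A$ is nonsingular, then \[\bigcup_{x\in V(f)}\mathbb{S}_x=\bigcup_{x\in V(f^c)}\mathbb{S}_x=\bigcup_{\mathbb{S}_x\subseteq V(N(f))\cap V(N(f^c))}\mathbb{S}_x,\] whence $\bigcup_{x\in V(f)}\mathbb{S}_x=\bigcup_{x\in V(f^c)}\mathbb{S}_x=V(N(f))=V(N(f^c))$ if $f$ is also tame. (3) Suppose that $f^\circ_s(x)\in C_A$ for every $x\in\Omega$ and $f'_s(x)\in C_A$ for every $x\in\Omega\setminus\mathbb{R}$. Then \[\bigcup_{\mathbb{S}_x\subseteq V(N(f))}\mathbb{S}_x=\bigcup_{x\in V(f)}\mathbb{S}_x=\bigcup_{x\in V(f^c)}\mathbb{S}_x=\bigcup_{\mathbb{S}_x\subseteq V(N(f^c))}\mathbb{S}_x,\] whence $V(N(f))=\bigcup_{x\in V(f)}\mathbb{S}_x=\bigcup_{x\in V(f^c)}\mathbb{S}_x=V(N(f^c))$ if $f$ is also tame, and $V(N(f))=V(f)=V(f^c)=V(N(f^c))$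 if $f$ is slice preserving.
   Context: Let $A$ be a finite-dimensional real algebra with unit $1$ ($\mathbb{R}$ identified with $\mathbb{R}1$) which is alternative (the associator $(x,y,z)=(xy)z-x(yz)$ is alternating), with a $^*$-involution $x\mapsto x^c$ (real linear, $(x^c)^c=x$, $(xy)^c=y^cx^c$, $r^c=r$ for $r\in\mathbb{R}$). Let $t(x)=x+x^c$, $n(x)=xx^c$; $A$ is nonsingular if $n(x)=0$ implies $x=0$. The center of $A$ is the set of $r$ with $(r,a,b)=0$ and $ra=ar$ for all $a,b$; $C_A=\{0\}\cup\{a\in A: n(a),n(a^c)$ invertible elements of the center$\}$. Let $\mathbb{S}_A=\{J\in A:t(J)=0,n(J)=1\}$ (assumed non-empty), $Q_A=\mathbb{R}\cup\{x\in A:t(x),n(x)\in\mathbb{R},\ 4n(x)>t(x)^2\}$; every $x\in Q_A$ is $\alpha+\beta J$ with $\alpha,\beta\in\mathbb{R}$, $J\in\mathbb{S}_A$, $x^c=\alpha-\beta J$, $\mathrm{im}(x)=x-t(x)/2$, and $\mathbb{S}_x=\{\alpha+\beta I:I\in\mathbb{S}_A\}$. Let $D\subseteq\mathbb{C}$ be non-empty and invariant under complex conjugation and $\Omega=\{\alpha+\beta J:\alpha+i\beta\in D,\ J\in\mathbb{S}_A\}$. Let $A_{\mathbb{C}}=\{a+\imath b:a,b\in A\}$ with product $(a+\imath b)(a'+\imath b')=aa'-bb'+\imath(ab'+ba')$, conjugation $\overline{a+\imath b}=a-\imath b$, involution $(a+\imath b)^c=a^c+\imath b^c$. A stem function is $F=F_1+\imath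 F_2:D\to A_{\mathbb{C}}$ with $F(\bar z)=\overline{F(z)}$; it induces the slice function $f=\mathcal{I}(F)$, $f(\alpha+\beta J)=F_1(\alpha+i\beta)+JF_2(\alpha+i\beta)$. Slice product $f\cdot g=\mathcal{I}(FG)$, conjugate $f^c=\mathcal{I}(F^c)$, $F^c(z)=F(z)^c$, normal function $N(f)=f\cdot f^c$. $f$ is slice preserving if $F_1,F_2$ are real valued; tame if $N(f)$ is slice preserving and $N(f)=N(f^c)$. $V(h)=\{x:h(x)=0\}$. $f^\circ_s(x)=\frac12(f(x)+f(x^c))$, $f'_s(x)=\frac12\mathrm{im}(x)^{-1}(f(x)-f(x^c))$ for $x\in\Omega\setminus\mathbb{R}$. Unions of the form $\bigcup_{\mathbb{S}_x\subseteq E}\mathbb{S}_x$ range over $x\in\Omega$. *)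

From HB Require Import structures.
From mathcomp Require Import all_boot all_order all_algebra.
From mathcomp Require Import boolp classical_sets reals.

Set Implicit Arguments.
Unset Strict Implicit.
Unset Printing Implicit Defensive.

Import GRing.Theory Num.Theory.
Local Open Scope ring_scope.
Local Open Scope classical_set_scope.

Record altStarAlg (R : realType) (A : vectType R) := AltStarAlg {
  amul : A -> A -> A;
  aone : A;
  aconj : A -> A;
  amulDl : forall (a : R) (x y z : A), amul (a *: x + y) z = a *: amul x z + amul y z;
  amulDr : forall (a : R) (x y z : A), amul z (a *: x + y) = a *: amul z x + amul z y;
  amul1l : forall x, amul aone x = x;
  amul1r : forall x, amul x aone = x;
  (* R is identified with R1 (so the embedding r |-> r1 is injective) *)
  aone_neq0 : aone != 0;
  (* the associator (x,y,z) = (xy)z - x(yz) is alternating: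
     it vanishes whenever two of its arguments coincide *)
  alt_xxy : forall x y, amul (amul x x) y - amul x (amul x y) = 0;
  alt_xyx : forall x y, amul (amul x y) x - amul x (amul y x) = 0;
  alt_yxx : forall x y, amul (amul y x) x - amul y (amul x x) = 0;
  aconjD : forall (a : R) (x y : A), aconj (a *: x + y) = a *: aconj x + aconj y;
  aconjK : forall x, aconj (aconj x) = x;
  aconjM : forall x y, aconj (amul x y) = amul (aconj y) (aconj x);
  aconj_real : forall r : R, aconj (r *: aone) = r *: aone
}.

Section Defs.
Context {R : realType} {A : vectType R} (S : altStarAlg A).

Local Notation "x ** y" := (amul S x y) (at level 40, left associativity).
Local Notation e1 := (aone S).
Local Notation "x ^c" := (aconj S x).

Definition isReal (x : A) : Prop := exists r : R, x = r *: e1.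

Definition tr (x : A) : A := x + x^c.
Definition nrm (x : A) : A := x ** x^c.

Definition assoc (x y z : A) : A := (x ** y) ** z - x ** (y ** z).

Definition center (r : A) : Prop :=
  (forall a b, assoc r a b = 0) /\ (forall a, r ** a = a ** r).

Definition invertible (x : A) : Prop := exists y, x ** y = e1 /\ y ** x = e1.

Definition CA (a : A) : Prop :=
  a = 0 \/
  (center (nrm a) /\ invertible (nrm a) /\ center (nrm a^c) /\ invertible (nrm a^c)).

Definition sphS (J : A) : Prop := tr J = 0 /\ nrm J = e1.

Definition nonsingular : Prop := forall x, nrm x = 0 -> x = 0.

(* D is a subset of C, alpha + i beta encoded as the pair (alpha, beta) *)
Definition Omega (D : R -> R -> Prop) : set A :=
  [set x | exists a b J, D a b /\ sphS J /\ x = a *: e1 + b *: J].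

Definition sphere (x : A) : set A :=
  [set y | exists (a b : R) J I, sphS J /\ sphS I /\
     x = a *: e1 + b *: J /\ y = a *: e1 + b *: I].

(* stem functions D -> A_C, F = G1 + i G2, with F(conj z) = conj (F z) *)
Definition is_stem (D : R -> R -> Prop) (G1 G2 : R -> R -> A) : Prop :=
  forall a b, D a b -> G1 a (- b) = G1 a b /\ G2 a (- b) = - G2 a b.

Definition induces (D : R -> R -> Prop) (G1 G2 : R -> R -> A) (h : A -> A) : Prop :=
  forall a b J, D a b -> sphS J -> h (a *: e1 + b *: J) = G1 a b + J ** G2 a b.

Definition stem_slice_preserving (D : R -> R -> Prop) (G1 G2 : R -> R -> A) : Prop :=
  forall a b, D a b -> isReal (G1 a b) /\ isReal (G2 a b).

Definition Vz (D : R -> R -> Prop) (h : A -> A) : set A :=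
  [set x | Omega D x /\ h x = 0].

Definition bigsph (E : set A) : set A := [set y | exists2 x, E x & sphere x y].

Definition bigsph_in (D : R -> R -> Prop) (E : set A) : set A :=
  [set y | exists x, Omega D x /\ sphere x `<=` E /\ sphere x y].

Definition imag (x : A) : A := x - 2^-1 *: tr x.

Definition sph_val (f : A -> A) (x : A) : A := 2^-1 *: (f x + f x^c).

(* "f'_s(x) in C_A": f'_s(x) = 1/2 im(x)^{-1} (f(x) - f(x^c)),
   with im(x)^{-1} the (two-sided) inverse of im(x) *)
Definition sph_der_in_CA (f : A -> A) (x : A) : Prop :=
  exists y, imag x ** y = e1 /\ y ** imag x = e1 /\
    CA (2^-1 *: (y ** (f x - f x^c))).

End Defs.

From HB Require Import structures.
From mathcomp Require Import all_boot all_order all_algebra.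
From mathcomp Require Import boolp classical_sets reals.
From mathcomp Require Import ring lra.
Import GRing.Theory Num.Theory.
Local Open Scope ring_scope.

(** Write [x = a + b J] and [f(x) = u + J v] with [u + i v = F(a + i b)]:
    [f] vanishes somewhere on [S_x] iff [u + I v = 0] for an imaginary unit [I].
    If [v] lies in [C_A], every associator built from [v] and [v^c] vanishes
    (by the middle Moufang identities), and [u + J v = 0] then forces
    [u u^c = v v^c] and [u v^c + v u^c = 0], i.e. the stem of [N(f)] vanishes
    at [a + i b], and likewise the stem of [N(f^c)].  Conversely these four
    identities give the root [I := - (u v^c) n(v)^-1] when [v <> 0]; if also
    [u] lies in [C_A], the first two identities imply the last two.  The
    conditions being symmetric under [(u, v) |-> (u^c, v^c)], the zeros of
    [f], [f^c], [N(f)] and [N(f^c)] are matched sphere by sphere. *)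

Lemma eq_coord (K : fieldType) (V : vectType K) (x y : V) :
  (forall i, coord (vbasis fullv) i x = coord (vbasis fullv) i y) -> x = y.
Proof.
move=> Hxy; rewrite (coord_vbasis (memvf x)) (coord_vbasis (memvf y)).
by apply: eq_bigr => i _; rewrite Hxy.
Qed.

Ltac coord_simpl := rewrite ?(linearD, linearN, linearB, linearZ, linear0) /=.

(* Each coordinate in [vbasis fullv] is a linear form, so an equation that is a
   linear consequence of the context equations of the same type is checked by
   [lra] coordinatewise, with products as atoms. *)
Ltac coord_lra :=
  match goal with |- @eq ?T _ _ =>
    let i := fresh "i" in
    apply: eq_coord => i;
    repeat match goal with
    | H : @eq ?U _ _ |- _ =>
        unify U T; move: H => /(congr1 (coord (vbasis fullv) i))
    end
  end; coord_simpl; lra.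

Lemma sq_complex_eq0 {K : numDomainType} {r s : K} :
  r * r - s * s = 0 -> r * s + s * r = 0 -> r = 0 /\ s = 0.
Proof.
move=> re im; have /eqP : (r * s) *+ 2 = 0 by rewrite mulr2n {2}mulrC.
rewrite mulrn_eq0 mulf_eq0 /= => /orP [/eqP r0 | /eqP s0].
  by move: re; rewrite r0 mul0r sub0r => /eqP; rewrite oppr_eq0 mulf_eq0 orbb => /eqP.
by move: re; rewrite s0 mul0r subr0 => /eqP; rewrite mulf_eq0 orbb => /eqP.
Qed.

Section Notions.
Context {R : realType} {A : vectType R} (S : altStarAlg A).
Local Notation "x ** y" := (amul S x y) (at level 40, left associativity).
Local Notation "x ^c" := (aconj S x).

(* The nonzero elements of [C_A], with [n(v^c)] written [v^c v]. *)
Definition CAstar v :=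
  [/\ center S (v ** v^c), invertible S (v ** v^c),
      center S (v^c ** v) & invertible S (v^c ** v)].

(* The two components of the product [(u + i v)(u + i v)^c] in [A_C]. *)
Definition nrm_stem1 u v := u ** u^c - v ** v^c.
Definition nrm_stem2 u v := u ** v^c + v ** u^c.

Definition slice_root u v := exists2 I, sphS S I & u + I ** v = 0.

Definition CA_valued (D : R -> R -> Prop) (V : R -> R -> A) :=
  forall a b, D a b -> CA S (V a b).

End Notions.

Section AltStarAlgebra.
Context {R : realType} {A : vectType R} {S : altStarAlg A}.
Local Notation "x ** y" := (amul S x y) (at level 40, left associativity).
Local Notation e1 := (aone S).
Local Notation "x ^c" := (aconj S x).
Local Notation asc := (assoc S).
Local Notation CAstar := (CAstar S).

Lemma amul_addl x y z : (x + y) ** z = x ** z + y ** z.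
Proof. by have := amulDl S 1 x y z; rewrite !scale1r. Qed.

Lemma amul_addr x y z : z ** (x + y) = z ** x + z ** y.
Proof. by have := amulDr S 1 x y z; rewrite !scale1r. Qed.

Lemma amul0l z : 0 ** z = 0.
Proof. by apply: (addrI (0 ** z)); rewrite addr0 -amul_addl addr0. Qed.

Lemma amul0r z : z ** 0 = 0.
Proof. by apply: (addrI (z ** 0)); rewrite addr0 -amul_addr addr0. Qed.

Lemma amulZl a x z : (a *: x) ** z = a *: (x ** z).
Proof. by have := amulDl S a x 0 z; rewrite addr0 amul0l addr0. Qed.

Lemma amulZr a x z : z ** (a *: x) = a *: (z ** x).
Proof. by have := amulDr S a x 0 z; rewrite addr0 amul0r addr0. Qed.

Lemma amulNl x z : (- x) ** z = - (x ** z).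
Proof. by rewrite -scaleN1r amulZl scaleN1r. Qed.

Lemma amulNr x z : z ** (- x) = - (z ** x).
Proof. by rewrite -scaleN1r amulZr scaleN1r. Qed.

Lemma amulBl x y z : (x - y) ** z = x ** z - y ** z.
Proof. by rewrite amul_addl amulNl. Qed.

Lemma amulBr x y z : z ** (x - y) = z ** x - z ** y.
Proof. by rewrite amul_addr amulNr. Qed.

Definition amulE :=
  (amul_addl, amul_addr, amulBl, amulBr, amulNl, amulNr, amulZl, amulZr, amul0l, amul0r).

Lemma aconj_add x y : (x + y)^c = x^c + y^c.
Proof. by have := aconjD S 1 x y; rewrite !scale1r. Qed.

Lemma aconj0 : 0^c = 0.
Proof. by apply: (addrI (0^c)); rewrite addr0 -aconj_add addr0. Qed.

Lemma aconjZ a x : (a *: x)^c = a *: x^c.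
Proof. by have := aconjD S a x 0; rewrite !addr0 aconj0 addr0. Qed.

Lemma aconjN x : (- x)^c = - x^c.
Proof. by rewrite -scaleN1r aconjZ scaleN1r. Qed.

Lemma aconj1 : e1^c = e1.
Proof. by have := aconj_real S 1; rewrite !scale1r. Qed.

Lemma scaler_aone_inj : injective (fun r : R => r *: e1).
Proof.
move=> r s /eqP; rewrite -subr_eq0 -scalerBl scaler_eq0 subr_eq0 (negbTE (aone_neq0 S)).
by rewrite orbF => /eqP.
Qed.

Lemma not_invertible0 : ~ invertible S 0.
Proof. by case=> y [+ _]; rewrite amul0l => /esym/eqP; rewrite (negbTE (aone_neq0 S)). Qed.

Lemma assoc_xxy x y : asc x x y = 0. Proof. exact: alt_xxy. Qed.
Lemma assoc_xyx x y : asc x y x = 0. Proof. exact: alt_xyx. Qed.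
Lemma assoc_yxx x y : asc y x x = 0. Proof. exact: alt_yxx. Qed.

Lemma assoc_swap12 x y z : asc x y z = - asc y x z.
Proof.
have := assoc_xxy (x + y) z; have := assoc_xxy x z; have := assoc_xxy y z.
rewrite /assoc !amulE => *; coord_lra.
Qed.

Lemma assoc_swap23 x y z : asc x y z = - asc x z y.
Proof.
have := assoc_yxx (y + z) x; have := assoc_yxx y x; have := assoc_yxx z x.
rewrite /assoc !amulE => *; coord_lra.
Qed.

Lemma assoc_rot x y z : asc x y z = asc y z x.
Proof. by rewrite assoc_swap12 assoc_swap23 opprK. Qed.

Lemma teichmuller a b c d :
  asc (a ** b) c d - asc a (b ** c) d + asc a b (c ** d) = a ** asc b c d + asc a b c ** d.
Proof. rewrite /assoc !amulE; coord_lra. Qed.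

Lemma assoc_mul_sqr x y z : asc (y ** x) y z - asc x (y ** y) z = - (y ** asc x y z).
Proof.
have := teichmuller y y x z.
rewrite (assoc_swap12 (y ** y) x z) (assoc_swap12 y (y ** x) z) !assoc_xxy ?amul0l ?amul0r
  ?addr0 (assoc_swap12 y x z) amulNr.
by move=> ?; coord_lra.
Qed.

Lemma assoc_mull x y z : asc (x ** y) y z = y ** asc x y z.
Proof.
have := teichmuller x y y z; rewrite assoc_xxy assoc_yxx amul0r amul0l addr0.
have := teichmuller y x y z.
rewrite (assoc_swap12 y (x ** y) z) (assoc_swap12 y x (y ** z)) assoc_xyx amul0l addr0.
by have := assoc_mul_sqr x y z; move=> *; coord_lra.
Qed.

Lemma assoc_mulr x y z : asc (y ** x) y z = asc x y z ** y.
Proof.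
have := teichmuller y x z y.
rewrite (assoc_swap23 (y ** x) z y) assoc_xyx (assoc_swap12 y x (z ** y))
  (assoc_swap23 x z y) amulNr (assoc_swap12 y x z) amulNl.
have := teichmuller x z y y.
rewrite !assoc_yxx amul0r (assoc_swap23 x (z ** y) y) (assoc_swap23 x z (y ** y))
  (assoc_swap23 x z y) amulNl add0r.
by have := assoc_mul_sqr x y z; move=> *; coord_lra.
Qed.

Lemma amulA_assoc0 {x y z} : asc x y z = 0 -> (x ** y) ** z = x ** (y ** z).
Proof. by move/eqP; rewrite subr_eq0 => /eqP. Qed.

Section Center.
Context {r : A} (Hr : center S r).

Lemma center_assocl a b : asc r a b = 0. Proof. by case: Hr. Qed.
Lemma center_assocm a b : asc a r b = 0.
Proof. by rewrite assoc_swap12 center_assocl oppr0. Qed.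
Lemma center_assocr a b : asc a b r = 0.
Proof. by rewrite -assoc_rot center_assocl. Qed.
Lemma center_comm a : r ** a = a ** r. Proof. by case: Hr. Qed.

Lemma center_unit_cancel {w} : invertible S r -> r ** w = 0 -> w = 0.
Proof.
case=> k [_ Hkr] Hw.
by have := amulA_assoc0 (center_assocm k w); rewrite Hkr Hw amul1l amul0r.
Qed.

Lemma center_inv {k} : r ** k = e1 -> k ** r = e1 -> center S k.
Proof.
move=> Hrk Hkr; have r_unit : invertible S r by exists k.
have rkK a : r ** (k ** a) = a.
  by rewrite -(amulA_assoc0 (center_assocl _ _)) Hrk amul1l.
have rKk a : r ** (a ** k) = a.
  by rewrite -(amulA_assoc0 (center_assocl _ _)) center_comm
    (amulA_assoc0 (center_assocm _ _)) Hrk amul1r.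
split=> [a b | a].
  apply: (center_unit_cancel r_unit).
  rewrite /assoc amulBr -(amulA_assoc0 (center_assocl _ _)) rkK.
  by rewrite -(amulA_assoc0 (center_assocl _ _)) Hrk amul1l subrr.
apply/eqP; rewrite -subr_eq0; apply/eqP; apply: (center_unit_cancel r_unit).
by rewrite amulBr rkK rKk subrr.
Qed.

Lemma inv_selfconj {k} : r^c = r -> r ** k = e1 -> k ** r = e1 -> k^c = k.
Proof.
move=> rc Hrk Hkr; have kcr : k^c ** r = e1 by rewrite -{1}rc -aconjM Hrk aconj1.
by rewrite -[k^c](amul1r S) -Hrk -(amulA_assoc0 (center_assocm _ _)) kcr amul1l.
Qed.

End Center.

Lemma invertible_scale c v : invertible S (c *: v) -> invertible S v.
Proof.
case=> y [y1 y2]; exists (c *: y).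
by split; [rewrite amulZr -amulZl | rewrite amulZl -amulZr].
Qed.

Lemma center_scale c v : c != 0 -> center S (c *: v) -> center S v.
Proof.
move=> c0 [Ha Hc]; split=> [a b | a].
  by have /eqP := Ha a b; rewrite /assoc !amulZl -scalerBr scaler_eq0 (negbTE c0) => /eqP.
by apply: (scalerI c0); rewrite -amulZl -amulZr Hc.
Qed.

Lemma nrm_scale c v : nrm S (c *: v) = (c * c) *: nrm S v.
Proof. by rewrite /nrm aconjZ amulZl amulZr scalerA. Qed.

Lemma nrm_selfconj v : (v ** v^c)^c = v ** v^c.
Proof. by rewrite aconjM aconjK. Qed.

Lemma CA_eq0_or_star {v} : CA S v -> v = 0 \/ CAstar v.
Proof.
case=> [|[? [? []]]]; first by left.
by rewrite /nrm aconjK => *; right; split.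
Qed.

Lemma CAstar_conj {v} : CAstar v -> CAstar v^c.
Proof. by case; rewrite /CAstar aconjK. Qed.

Lemma CA_conj {v} : CA S v -> CA S v^c.
Proof. by case=> [->|[? [? [? ?]]]]; [left; rewrite aconj0 | right; rewrite aconjK]. Qed.

Lemma CA_scale {c v} : c != 0 -> CA S (c *: v) -> CA S v.
Proof.
move=> c0; have cc0 : c * c != 0 by rewrite mulf_neq0.
case=> [/eqP | ]; first by rewrite scaler_eq0 (negbTE c0) => /eqP; left.
rewrite aconjZ !nrm_scale => -[c1 [i1 [c2 i2]]]; right.
split; first exact: center_scale cc0 c1.
split; first exact: invertible_scale i1.
by split; [exact: center_scale cc0 c2 | exact: invertible_scale i2].
Qed.

Section CAstarTheory.
Context {v : A} (Hv : CAstar v).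

Let cN : center S (v ** v^c). Proof. by case: Hv. Qed.
Let iN : invertible S (v ** v^c). Proof. by case: Hv. Qed.
Let cM : center S (v^c ** v). Proof. by case: Hv. Qed.

(* In [CAstar_associj], [v] is the [i]-th and [v^c] the [j]-th argument.
   Below, [w] is annihilated by [v] and [v^c] on both sides by the middle
   Moufang identities, and then [n(v) w = 0] by cycling the associator. *)
Lemma CAstar_assoc12 z : asc v v^c z = 0.
Proof.
set w := asc v v^c z.
have vw : v ** w = 0.
  have := assoc_mull v^c v z; rewrite (center_assocl cM) assoc_swap12 amulNr.
  by move/esym/eqP; rewrite oppr_eq0 => /eqP.
have vcw : v^c ** w = 0 by have := assoc_mull v v^c z; rewrite (center_assocl cN).
have wv : w ** v = 0.
  have := assoc_mulr v^c v z; rewrite (center_assocl cN) assoc_swap12 amulNl.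
  by move/esym/eqP; rewrite oppr_eq0 => /eqP.
have wvc : w ** v^c = 0 by have := assoc_mulr v v^c z; rewrite (center_assocl cM).
have rot1 := assoc_rot v v^c w; have rot2 := assoc_rot v^c w v.
rewrite /assoc ?vw ?vcw ?wv ?wvc ?amul0l ?amul0r in rot1 rot2.
have comm := center_comm cN w.
by apply: (center_unit_cancel cN iN); coord_lra.
Qed.

Lemma CAstar_assoc21 z : asc v^c v z = 0.
Proof. by rewrite assoc_swap12 CAstar_assoc12 oppr0. Qed.
Lemma CAstar_assoc23 z : asc z v v^c = 0.
Proof. by rewrite -2!assoc_rot CAstar_assoc12. Qed.
Lemma CAstar_assoc32 z : asc z v^c v = 0.
Proof. by rewrite -2!assoc_rot CAstar_assoc21. Qed.
Lemma CAstar_assoc13 z : asc v z v^c = 0.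
Proof. by rewrite assoc_swap23 CAstar_assoc12 oppr0. Qed.
Lemma CAstar_assoc31 z : asc v^c z v = 0.
Proof. by rewrite assoc_swap23 CAstar_assoc21 oppr0. Qed.

Lemma CAstar_rcancel z : z ** v = 0 -> z = 0.
Proof.
move=> zv; apply: (center_unit_cancel cN iN); rewrite (center_comm cN).
by rewrite -(amulA_assoc0 (CAstar_assoc23 _)) zv amul0l.
Qed.

Lemma CAstar_nrm_conj : v ** v^c = v^c ** v.
Proof.
apply/eqP; rewrite -subr_eq0; apply/eqP; apply: CAstar_rcancel.
by rewrite amulBl (amulA_assoc0 (CAstar_assoc12 _)) (center_comm cM) subrr.
Qed.

End CAstarTheory.

Section ImaginaryUnits.
Context {J : A} (HJ : sphS S J).

Lemma sphS_conj : J^c = - J.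
Proof. by case: HJ; rewrite /tr => tr0 _; apply/eqP; rewrite -addr_eq0 addrC tr0. Qed.

Lemma sphS_sqr : J ** J = - e1.
Proof. by case: HJ => _; rewrite /nrm sphS_conj amulNr => <-; rewrite opprK. Qed.

Lemma sphS_mulKl z : J ** (J ** z) = - z.
Proof. by rewrite -(amulA_assoc0 (assoc_xxy J z)) sphS_sqr amulNl amul1l. Qed.

Lemma sphS_mulKr z : (z ** J) ** J = - z.
Proof. by rewrite (amulA_assoc0 (assoc_yxx J z)) sphS_sqr amulNr amul1r. Qed.

Lemma sphSN : sphS S (- J).
Proof.
case: HJ; rewrite /sphS /tr /nrm aconjN -opprD amulNl amulNr opprK => ->.
by rewrite oppr0.
Qed.

Lemma sphS_neq_real c : J <> c *: e1.
Proof.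
move=> Jc; have c0 : c = 0.
  have := sphS_conj; rewrite Jc aconjZ aconj1 => cc.
  by apply: scaler_aone_inj; rewrite /= scale0r; coord_lra.
have [_] := HJ; rewrite /nrm Jc c0 scale0r amul0l => /esym/eqP.
by rewrite (negbTE (aone_neq0 S)).
Qed.

Lemma slice_eq0 c d : c *: e1 + d *: J = 0 -> c = 0 /\ d = 0.
Proof.
move=> E; have d0 : d = 0.
  apply/eqP; apply/negP => /negP dn; apply: (sphS_neq_real (- (c / d))).
  apply: (scalerI dn); rewrite scalerA mulrN mulrCA mulfV // mulr1 scaleNr.
  by apply/eqP; rewrite -addr_eq0 addrC E.
by split=> //; apply: scaler_aone_inj; rewrite /= scale0r -E d0 scale0r addr0.
Qed.

Lemma aconj_slice a b : (a *: e1 + b *: J)^c = a *: e1 + b *: (- J).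
Proof. by rewrite aconj_add !aconjZ aconj1 sphS_conj. Qed.

Lemma slice_not_real a b : b != 0 -> ~ isReal S (a *: e1 + b *: J).
Proof.
move=> b0 [r E]; have := @slice_eq0 (a - r) b.
by rewrite scalerBl -addrAC E subrr => /(_ erefl) [_ /eqP]; rewrite (negbTE b0).
Qed.

End ImaginaryUnits.

Lemma slice_rep_eq {a b J a' b' J'} : sphS S J -> sphS S J' ->
  a *: e1 + b *: J = a' *: e1 + b' *: J' ->
  [/\ a' = a, b' *: J' = b *: J & b' = b \/ b' = - b].
Proof.
move=> HJ HJ' E; have := congr1 (aconj S) E; rewrite !aconj_slice // => Ec.
have aa : a' = a by apply: scaler_aone_inj; coord_lra.
have bJ : b' *: J' = b *: J by move: E; rewrite aa => /addrI.
have bb : b' * b' = b * b.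
  have [_ nJ] := HJ; have [_ nJ'] := HJ'.
  by apply: scaler_aone_inj; rewrite /= -{1}nJ' -nJ -!nrm_scale bJ.
split=> //; have : (b' - b) * (b' + b) == 0 by rewrite mulrBl !mulrDr bb; apply/eqP; ring.
by rewrite mulf_eq0 subr_eq0 addr_eq0 => /orP [/eqP | /eqP]; [left | right].
Qed.

Lemma sphere_rep {a b J x y} : sphS S J -> x = a *: e1 + b *: J -> sphere S x y ->
  exists2 I, sphS S I & y = a *: e1 + b *: I.
Proof.
move=> HJ -> [a' [b' [J' [I' [HJ' [HI' [E ->]]]]]]].
have [-> _ [->|->]] := slice_rep_eq HJ HJ' E; first by exists I'.
by exists (- I'); [exact: sphSN | rewrite scaleNr scalerN].
Qed.

Lemma sphere_slice a b {J I} : sphS S J -> sphS S I ->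
  sphere S (a *: e1 + b *: J) (a *: e1 + b *: I).
Proof. by move=> HJ HI; exists a, b, J, I. Qed.

End AltStarAlgebra.

Section SliceRootTheory.
Context {R : realType} {A : vectType R} {S : altStarAlg A}.
Local Notation "x ** y" := (amul S x y) (at level 40, left associativity).
Local Notation e1 := (aone S).
Local Notation "x ^c" := (aconj S x).
Local Notation CAstar := (CAstar S).
Local Notation nrm_stem1 := (nrm_stem1 S).
Local Notation nrm_stem2 := (nrm_stem2 S).
Local Notation slice_root := (slice_root S).

Lemma nrm_stem_conj_root {J u v} : sphS S J -> u + J ** v = 0 ->
  nrm_stem1 u^c v^c + (- J) ** nrm_stem2 u^c v^c = 0.
Proof.
move=> HJ /eqP; rewrite addr_eq0 => /eqP ->.
rewrite /nrm_stem1 /nrm_stem2 !aconjK aconjN aconjM (sphS_conj HJ) !amulE.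
have := assoc_mull (S:=S) v^c J v; rewrite /assoc (sphS_mulKr HJ) amulNl amulBr.
by move=> ?; coord_lra.
Qed.

Lemma nrm_stems_eq0 {J u v} : CA S v -> sphS S J -> u + J ** v = 0 ->
  [/\ nrm_stem1 u v = 0, nrm_stem2 u v = 0,
      nrm_stem1 u^c v^c = 0 & nrm_stem2 u^c v^c = 0].
Proof.
move=> /CA_eq0_or_star [-> | Hv] HJ /eqP; rewrite addr_eq0 => /eqP ->.
  by rewrite /nrm_stem1 /nrm_stem2 !amulE !oppr0 !aconj0 !amulE !subrr !addr0.
have [cN _ _ _] := Hv.
have uc : (- (J ** v))^c = v^c ** J by rewrite aconjN aconjM (sphS_conj HJ) amulNr opprK.
rewrite /nrm_stem1 /nrm_stem2 !aconjK uc.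
have s1 : (J ** v) ** v^c = J ** (v ** v^c) by rewrite (amulA_assoc0 (CAstar_assoc23 Hv J)).
have s2 : (J ** v) ** (v^c ** J) = - (v ** v^c).
  have h : assoc S (J ** v) v^c J = 0.
    by rewrite assoc_swap23 assoc_mulr (CAstar_assoc13 Hv) amul0l oppr0.
  by rewrite -(amulA_assoc0 h) s1 (amulA_assoc0 (assoc_xyx J _)) (center_comm cN) (sphS_mulKl HJ).
have s3 : v ** (v^c ** J) = (v ** v^c) ** J by rewrite (amulA_assoc0 (CAstar_assoc12 Hv J)).
have s4 : (v^c ** J) ** (J ** v) = - (v^c ** v).
  have := assoc_mull (S:=S) v^c J v; rewrite (CAstar_assoc31 Hv J) amul0r.
  by rewrite /assoc (sphS_mulKr HJ) amulNl => /eqP; rewrite subr_eq0 => /eqP <-.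
have s5 : (v^c ** J) ** v = v^c ** (J ** v) by rewrite (amulA_assoc0 (CAstar_assoc31 Hv J)).
split.
- by rewrite amulNl s2 opprK subrr.
- by rewrite amulNl s1 s3 (center_comm cN) addrC subrr.
- by rewrite amulNr s4 opprK subrr.
- by rewrite amulNr s5 subrr.
Qed.

Lemma nrm_stems_slice_root {u v} : CAstar v ->
  nrm_stem1 u v = 0 -> nrm_stem2 u v = 0 ->
  nrm_stem1 u^c v^c = 0 -> nrm_stem2 u^c v^c = 0 -> slice_root u v.
Proof.
move=> Hv; rewrite /nrm_stem1 /nrm_stem2 !aconjK => G1 G2 H1 H2.
have [cN [k [Nk kN]] _ _] := Hv.
have NM := CAstar_nrm_conj Hv.
have ck := center_inv cN Nk kN.
have kc := inv_selfconj cN (nrm_selfconj v) Nk kN.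
have uN : u ** u^c = v ** v^c by apply/eqP; rewrite -subr_eq0 G1.
have uM : u^c ** u = v ** v^c by rewrite NM; apply/eqP; rewrite -subr_eq0 H1.
have Hu : CAstar u by rewrite /CAstar uN uM; split=> //; exists k.
pose I := - ((u ** v^c) ** k).
have Iv : I ** v = - u.
  rewrite /I amulNl; congr (- _).
  rewrite (amulA_assoc0 (center_assocm ck _ _)) (center_comm ck).
  rewrite -(amulA_assoc0 (center_assocr ck _ _)) (amulA_assoc0 (CAstar_assoc32 Hv u)) -NM.
  by rewrite (amulA_assoc0 (center_assocm cN _ _)) Nk amul1r.
have Ic : I^c = - I.
  rewrite /I aconjN aconjM kc aconjM aconjK opprK.
  apply/eqP; rewrite eq_sym -addr_eq0; apply/eqP.
  by rewrite -(center_comm ck) -amul_addr G2 amul0r.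
have Iu : I ** u = v.
  rewrite /I amulNl -(center_comm ck) (amulA_assoc0 (center_assocl ck _ _)).
  rewrite (amulA_assoc0 (assoc_xyx u v^c)).
  have -> : v^c ** u = - (u^c ** v) by apply/eqP; rewrite -addr_eq0 addrC H2.
  rewrite amulNr -(amulA_assoc0 (CAstar_assoc12 Hu v)) uN amulNr opprK.
  by rewrite -(amulA_assoc0 (center_assocm cN _ _)) kN amul1l.
have II : I ** I = - e1.
  apply/eqP; rewrite -subr_eq0 opprK; apply/eqP; apply: (CAstar_rcancel Hv).
  by rewrite amul_addl amul1l (amulA_assoc0 (assoc_xxy I v)) Iv amulNr Iu addNr.
exists I; last by rewrite Iv subrr.
by split; [rewrite /tr Ic subrr | rewrite /nrm Ic amulNr II opprK].
Qed.

Lemma nrm_stems_conj_eq0 {u v} : CA S u -> CAstar v ->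
  nrm_stem1 u v = 0 -> nrm_stem2 u v = 0 ->
  nrm_stem1 u^c v^c = 0 /\ nrm_stem2 u^c v^c = 0.
Proof.
move=> Hu0 Hv; rewrite /nrm_stem1 /nrm_stem2 !aconjK => G1 G2.
have [cN iN _ _] := Hv; have NM := CAstar_nrm_conj Hv.
have uN : u ** u^c = v ** v^c by apply/eqP; rewrite -subr_eq0 G1.
have [u0 | Hu] := CA_eq0_or_star Hu0.
  by move: iN; rewrite -uN u0 aconj0 amul0r => /not_invertible0.
have uM : u^c ** u = v ** v^c by rewrite -(CAstar_nrm_conj Hu).
split; first by rewrite uM NM subrr.
apply: (center_unit_cancel cN iN).
have h1 : u^c ** (u ** v^c) = (v ** v^c) ** v^c.
  by rewrite -(amulA_assoc0 (CAstar_assoc21 Hu v^c)) uM.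
have h2 : u^c ** (v ** u^c) = (u^c ** v) ** u^c by rewrite (amulA_assoc0 (assoc_xyx u^c v)).
have h3 : u ** v^c = - (v ** u^c) by apply/eqP; rewrite -addr_eq0 G2.
have h4 : ((v ** v^c) ** v^c) ** u = (v ** v^c) ** (v^c ** u).
  by rewrite (amulA_assoc0 (center_assocl cN _ _)).
have h5 : ((u^c ** v) ** u^c) ** u = (v ** v^c) ** (u^c ** v).
  by rewrite (amulA_assoc0 (CAstar_assoc32 Hu _)) uM (center_comm cN).
move: h1; rewrite h3 amulNr h2 => h1.
have := congr1 (amul S^~ u) h1; rewrite /= amulNl h4 h5 => h6.
by rewrite amul_addr -h6 subrr.
Qed.

Lemma slice_root_conj {u v} : CA S v -> slice_root u v -> slice_root u^c v^c.
Proof.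
move=> Hv [I HI root]; have [v0 | Hv'] := CA_eq0_or_star Hv.
  by exists I => //; move: root; rewrite v0 amul0r addr0 => ->; rewrite aconj0 amul0r addr0.
have [g1 g2 h1 h2] := nrm_stems_eq0 Hv HI root.
by apply: nrm_stems_slice_root; rewrite ?aconjK //; exact: CAstar_conj.
Qed.

End SliceRootTheory.

Local Open Scope classical_set_scope.

Section SliceZeros.
Context {R : realType} {A : vectType R} {S : altStarAlg A} {D : R -> R -> Prop}.
Local Notation "x ** y" := (amul S x y) (at level 40, left associativity).
Local Notation e1 := (aone S).
Local Notation "x ^c" := (aconj S x).
Local Notation Vz := (Vz S D).
Local Notation nrm_stem1 := (nrm_stem1 S).
Local Notation nrm_stem2 := (nrm_stem2 S).
Local Notation slice_root := (slice_root S).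
Local Notation CAstar := (CAstar S).
Local Notation CA_valued := (CA_valued S D).

Lemma Omega_slice {a b I} : D a b -> sphS S I -> Omega S D (a *: e1 + b *: I).
Proof. by move=> Dab HI; exists a, b, I. Qed.

Lemma CA_valued_conj {V} : CA_valued V -> CA_valued (fun a b => (V a b)^c).
Proof. by move=> HV a b Dab; exact: CA_conj (HV a b Dab). Qed.

Lemma stem2_real_axis {U V : R -> R -> A} {a : R} : is_stem D U V -> D a 0 -> V a 0 = 0.
Proof. by move=> HUV /HUV [_]; rewrite oppr0 => ?; coord_lra. Qed.

Lemma eq_Vz_iff {h h' : A -> A} :
  (forall x, Omega S D x -> h x = 0 <-> h' x = 0) -> Vz h = Vz h'.
Proof. by move=> hh'; apply/seteqP; split=> x [Ox hx]; split=> //; apply/(hh' x Ox). Qed.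

Lemma eq_Vz {h h' : A -> A} : (forall x, Omega S D x -> h x = h' x) -> Vz h = Vz h'.
Proof. by move=> hh'; apply: eq_Vz_iff => x /hh' ->. Qed.

Section Induced.
Context {h : A -> A} {U V : R -> R -> A} (Hh : induces S D U V h).

Lemma Vz_slice x : Vz h x ->
  exists a b J, [/\ D a b, sphS S J, x = a *: e1 + b *: J & U a b + J ** V a b = 0].
Proof.
case=> -[a [b [J [Dab [HJ ->]]]]] hx.
by exists a, b, J; split=> //; rewrite -hx (Hh _ _ _ Dab HJ).
Qed.

Lemma bigsph_Vz_slice {a b I} : D a b -> sphS S I -> slice_root (U a b) (V a b) ->
  bigsph S (Vz h) (a *: e1 + b *: I).
Proof.
move=> Dab HI [J HJ root]; exists (a *: e1 + b *: J); last exact: sphere_slice.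
by split; [exact: Omega_slice | rewrite (Hh _ _ _ Dab HJ)].
Qed.

Lemma bigsph_VzP y : bigsph S (Vz h) y ->
  exists a b I, [/\ D a b, sphS S I, y = a *: e1 + b *: I & slice_root (U a b) (V a b)].
Proof.
case=> x /Vz_slice [a [b [J [Dab HJ -> root]]]] /(sphere_rep HJ erefl) [I HI ->].
by exists a, b, I; split=> //; exists J.
Qed.

Lemma sphere_Vz_full {a b J} : D a b -> sphS S J -> U a b = 0 -> V a b = 0 ->
  sphere S (a *: e1 + b *: J) `&` Vz h = sphere S (a *: e1 + b *: J).
Proof.
move=> Dab HJ U0 V0; apply/seteqP; split=> y; first by case.
move=> yS; split=> //; have [I HI ->] := sphere_rep HJ erefl yS.
by split; [exact: Omega_slice | rewrite (Hh _ _ _ Dab HI) U0 V0 amul0r addr0].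
Qed.

Lemma sphere_Vz_empty {a b J} : D a b -> sphS S J -> ~ slice_root (U a b) (V a b) ->
  sphere S (a *: e1 + b *: J) `&` Vz h = set0.
Proof.
move=> Dab HJ noroot; apply/seteqP; split=> y //; case=> yS [_ hy].
have [I HI E] := sphere_rep HJ erefl yS.
by apply: noroot; exists I; rewrite // -(Hh _ _ _ Dab HI) -E.
Qed.

Lemma sphere_Vz_single {a b J I} : D a b -> sphS S J -> CAstar (V a b) -> sphS S I ->
  U a b + I ** V a b = 0 ->
  sphere S (a *: e1 + b *: J) `&` Vz h = [set a *: e1 + b *: I].
Proof.
move=> Dab HJ HV HI root; apply/seteqP; split=> y.
  case=> yS [_ hy]; have [I' HI' E] := sphere_rep HJ erefl yS.
  rewrite E (Hh _ _ _ Dab HI') in hy; rewrite E /=.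
  have : (I' - I) ** V a b = 0 by rewrite amulBl; coord_lra.
  by move/(CAstar_rcancel HV)/eqP; rewrite subr_eq0 => /eqP ->.
move=> /= ->; split; first exact: sphere_slice.
by split; [exact: Omega_slice | rewrite (Hh _ _ _ Dab HI)].
Qed.

Lemma sph_val_slice {a b J} : D a b -> sphS S J -> sph_val S h (a *: e1 + b *: J) = U a b.
Proof.
move=> Dab HJ; rewrite /sph_val (aconj_slice HJ) (Hh _ _ _ Dab HJ) (Hh _ _ _ Dab (sphSN HJ)).
by rewrite amulNl; coord_lra.
Qed.

Lemma CA_stem2_of_sph_der {a b J} : D a b -> sphS S J -> b != 0 ->
  sph_der_in_CA S h (a *: e1 + b *: J) -> CA S (V a b).
Proof.
move=> Dab HJ b0 [y [y1 [y2 HCA]]].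
(* [im(x)^-1 = - b^-1 J], so [f'_s(x) = b^-1 V a b]. *)
have im : imag S (a *: e1 + b *: J) = b *: J.
  by rewrite /imag /tr (aconj_slice HJ); coord_lra.
rewrite im in y1 y2.
have yE : y = - (b^-1 *: J).
  have := congr1 (amul S^~ J) y2; rewrite /= amulZr amulZl (sphS_mulKr HJ) amul1l => <-.
  by rewrite scalerA mulVf // scale1r opprK.
rewrite (aconj_slice HJ) (Hh _ _ _ Dab HJ) (Hh _ _ _ Dab (sphSN HJ)) yE in HCA.
apply: (CA_scale (invr_neq0 b0)).
suff <- : 2^-1 *: (- (b^-1 *: J) ** (U a b + J ** V a b - (U a b + - J ** V a b))) =
  b^-1 *: V a b by [].
by rewrite !amulE (sphS_mulKl HJ); coord_lra.
Qed.

Section Normal.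
Context {Nh : A -> A}.
Hypothesis HN : induces S D
  (fun a b => nrm_stem1 (U a b) (V a b)) (fun a b => nrm_stem2 (U a b) (V a b)) Nh.

Lemma sphere_sub_Vz_normalE {a b J} : D a b -> sphS S J ->
  sphere S (a *: e1 + b *: J) `<=` Vz Nh <->
  nrm_stem1 (U a b) (V a b) = 0 /\ nrm_stem2 (U a b) (V a b) = 0.
Proof.
move=> Dab HJ; split=> [sub | [g1 g2] y /(sphere_rep HJ erefl) [I HI ->]].
  have [_ h1] := sub _ (sphere_slice a b HJ HJ).
  have [_ h2] := sub _ (sphere_slice a b HJ (sphSN HJ)).
  rewrite (HN _ _ _ Dab HJ) in h1; rewrite (HN _ _ _ Dab (sphSN HJ)) amulNl in h2.
  have g1 : nrm_stem1 (U a b) (V a b) = 0 by coord_lra.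
  split=> //; move: h1; rewrite g1 add0r => /(congr1 (amul S J)).
  by rewrite (sphS_mulKl HJ) amul0r => /eqP; rewrite oppr_eq0 => /eqP.
by split; [exact: Omega_slice | rewrite (HN _ _ _ Dab HI) g1 g2 amul0r addr0].
Qed.

Lemma Vz_normal_sub_bigsph_in :
  stem_slice_preserving S D (fun a b => nrm_stem1 (U a b) (V a b))
    (fun a b => nrm_stem2 (U a b) (V a b)) ->
  Vz Nh `<=` bigsph_in S D (Vz Nh).
Proof.
move=> real_stems y [Oy hy]; have [a [b [J [Dab [HJ Ey]]]]] := Oy.
exists y; split=> //; split; last by rewrite Ey; exact: sphere_slice.
rewrite Ey sphere_sub_Vz_normalE //.
have [[r1 E1] [r2 E2]] := real_stems a b Dab.
move: hy; rewrite Ey (HN _ _ _ Dab HJ) E1 E2 amulZr amul1r => /(slice_eq0 HJ) [-> ->].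
by rewrite !scale0r.
Qed.

Section CAValued.
Hypothesis HV : CA_valued V.

Lemma slice_root_nrm_stems {a b} : D a b -> slice_root (U a b) (V a b) ->
  [/\ nrm_stem1 (U a b) (V a b) = 0, nrm_stem2 (U a b) (V a b) = 0,
      nrm_stem1 (U a b)^c (V a b)^c = 0 & nrm_stem2 (U a b)^c (V a b)^c = 0].
Proof. by move=> Dab [I HI root]; exact: nrm_stems_eq0 (HV a b Dab) HI root. Qed.

Lemma bigsph_Vz_sub_Vz_normal : bigsph S (Vz h) `<=` Vz Nh.
Proof.
move=> y /bigsph_VzP [a [b [I [Dab HI -> root]]]].
have [g1 g2 _ _] := slice_root_nrm_stems Dab root.
by apply: (sphere_sub_Vz_normalE Dab HI).2 => //; exact: sphere_slice.
Qed.

Lemma bigsph_in_Vz_normal : CA_valued U -> bigsph_in S D (Vz Nh) = bigsph S (Vz h).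
Proof.
move=> HU; apply/seteqP; split=> y.
  case=> x [[a [b [J [Dab [HJ ->]]]]] [/(sphere_sub_Vz_normalE Dab HJ) [g1 g2]]].
  move=> /(sphere_rep HJ erefl) [I HI ->]; apply: bigsph_Vz_slice => //.
  have [V0 | HV'] := CA_eq0_or_star (HV a b Dab).
    move: g1; rewrite /nrm_stem1 V0 aconj0 amul0r subr0 => g1.
    have [U0 | [_ + _ _]] := CA_eq0_or_star (HU a b Dab); last by rewrite g1 => /not_invertible0.
    by exists J => //; rewrite U0 amul0r addr0.
  have [h1 h2] := nrm_stems_conj_eq0 (HU a b Dab) HV' g1 g2.
  exact: nrm_stems_slice_root.
move=> /bigsph_VzP [a [b [I [Dab HI -> root]]]].
have [g1 g2 _ _] := slice_root_nrm_stems Dab root.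
exists (a *: e1 + b *: I); split; first exact: Omega_slice.
by split; [exact/(sphere_sub_Vz_normalE Dab HI) | exact: sphere_slice].
Qed.

End CAValued.
End Normal.
End Induced.
End SliceZeros.

Section SliceFunctionZeros.
Context {R : realType} {A : vectType R} {S : altStarAlg A} {D : R -> R -> Prop}.
Local Notation "x ** y" := (amul S x y) (at level 40, left associativity).
Local Notation e1 := (aone S).
Local Notation "x ^c" := (aconj S x).
Local Notation Vz := (Vz S D).
Local Notation nrm_stem1 := (nrm_stem1 S).
Local Notation nrm_stem2 := (nrm_stem2 S).
Local Notation slice_root := (slice_root S).

Context {F1 F2 : R -> R -> A} {f fc Nf Nfc : A -> A}.
Local Notation F1c := (fun a b => (F1 a b)^c).
Local Notation F2c := (fun a b => (F2 a b)^c).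
Hypothesis Hf : induces S D F1 F2 f.
Hypothesis Hfc : induces S D F1c F2c fc.
Hypothesis HNf : induces S D
  (fun a b => nrm_stem1 (F1 a b) (F2 a b)) (fun a b => nrm_stem2 (F1 a b) (F2 a b)) Nf.
Hypothesis HNfc : induces S D
  (fun a b => (F1 a b)^c ** F1 a b - (F2 a b)^c ** F2 a b)
  (fun a b => (F1 a b)^c ** F2 a b + (F2 a b)^c ** F1 a b) Nfc.

Lemma induces_nrm_conj : induces S D
  (fun a b => nrm_stem1 (F1c a b) (F2c a b)) (fun a b => nrm_stem2 (F1c a b) (F2c a b)) Nfc.
Proof. by move=> a b I Dab HI; rewrite /nrm_stem1 /nrm_stem2 !aconjK; exact: HNfc. Qed.

Lemma Vz_sub_aconj_Vz_nrm_conj : Vz f `<=` [set y^c | y in Vz Nfc].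
Proof.
move=> x /(Vz_slice Hf) [a [b [J [Dab HJ -> root]]]].
exists (a *: e1 + b *: (- J)); last by rewrite (aconj_slice (sphSN HJ)) opprK.
split; first exact: Omega_slice (sphSN HJ).
by rewrite (induces_nrm_conj _ _ _ Dab (sphSN HJ)); exact: nrm_stem_conj_root HJ root.
Qed.

Lemma stem2_CA_valued {J0} : is_stem D F1 F2 -> sphS S J0 ->
  (forall x, Omega S D x -> ~ isReal S x -> sph_der_in_CA S f x) -> CA_valued S D F2.
Proof.
move=> HF HJ0 Hder a b Dab; have [b0 | b0] := eqVneq b 0.
  by left; move: Dab; rewrite b0 => /(stem2_real_axis HF).
apply: (CA_stem2_of_sph_der Hf Dab HJ0 b0); apply: Hder; first exact: Omega_slice.
exact: slice_not_real.
Qed.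

Lemma stem1_CA_valued {J0} : sphS S J0 ->
  (forall x, Omega S D x -> CA S (sph_val S f x)) -> CA_valued S D F1.
Proof.
move=> HJ0 Hval a b Dab; rewrite -(sph_val_slice Hf Dab HJ0).
exact/Hval/Omega_slice.
Qed.

Section CAValuedStem2.
Hypothesis HF2 : CA_valued S D F2.

Lemma slice_root_conjE {a b} : D a b ->
  slice_root (F1 a b) (F2 a b) <-> slice_root (F1c a b) (F2c a b).
Proof.
move=> Dab; split; first exact: slice_root_conj (HF2 a b Dab).
by move/(slice_root_conj (CA_conj (HF2 a b Dab))); rewrite !aconjK.
Qed.

Lemma sphere_Vz_trichotomy x : Omega S D x ->
  let P := sphere S x `&` Vz f in
  let Q := sphere S x `&` Vz fc in
  (P = set0 /\ Q = set0)
  \/ ((exists z, P = [set z]) /\ (exists z, Q = [set z]))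
  \/ (P = sphere S x /\ Q = sphere S x).
Proof.
case=> a [b [J [Dab [HJ ->]]]] P Q; rewrite {}/P {}/Q.
have [F20 | HV] := CA_eq0_or_star (HF2 a b Dab).
  have [F10 | F1n0] := eqVneq (F1 a b) 0.
    right; right; split; first exact: (sphere_Vz_full Hf Dab HJ F10 F20).
    by apply: (sphere_Vz_full Hfc Dab HJ); rewrite /= ?F10 ?F20 aconj0.
  have noroot : ~ slice_root (F1 a b) (F2 a b).
    by case=> I _; rewrite F20 amul0r addr0 => /eqP; rewrite (negbTE F1n0).
  left; split; first exact: (sphere_Vz_empty Hf Dab HJ noroot).
  by apply: (sphere_Vz_empty Hfc Dab HJ); rewrite -slice_root_conjE.
have [root | noroot] := pselect (slice_root (F1 a b) (F2 a b)).
  have [I HI rootI] := root; have [I' HI' rootI'] := (slice_root_conjE Dab).1 root.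
  right; left; split.
    by exists (a *: e1 + b *: I); exact: (sphere_Vz_single Hf Dab HJ HV HI rootI).
  exists (a *: e1 + b *: I').
  exact: (sphere_Vz_single Hfc Dab HJ (CAstar_conj HV) HI' rootI').
left; split; first exact: (sphere_Vz_empty Hf Dab HJ noroot).
by apply: (sphere_Vz_empty Hfc Dab HJ); rewrite -slice_root_conjE.
Qed.

Lemma bigsph_Vz_conj : bigsph S (Vz f) = bigsph S (Vz fc).
Proof.
apply/seteqP; split=> y.
  case/(bigsph_VzP Hf) => a [b [I [Dab HI -> root]]].
  by apply: (bigsph_Vz_slice Hfc Dab HI); rewrite -slice_root_conjE.
case/(bigsph_VzP Hfc) => a [b [I [Dab HI -> root]]].
by apply: (bigsph_Vz_slice Hf Dab HI); rewrite slice_root_conjE.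
Qed.

Lemma bigsph_Vz_conj_nonsingular : nonsingular S ->
  bigsph S (Vz fc) = bigsph_in S D (Vz Nf `&` Vz Nfc).
Proof.
move=> ns; apply/seteqP; split=> y.
  case/(bigsph_VzP Hfc) => a [b [I [Dab HI -> /(slice_root_conjE Dab).2 root]]].
  have [g1 g2 h1 h2] := slice_root_nrm_stems HF2 Dab root.
  exists (a *: e1 + b *: I); split; first exact: Omega_slice.
  split; last exact: sphere_slice.
  move=> z zS; split.
    exact: (sphere_sub_Vz_normalE HNf Dab HI).2.
  by apply: (sphere_sub_Vz_normalE induces_nrm_conj Dab HI).2.
case=> x [[a [b [J [Dab [HJ ->]]]]] [sub /(sphere_rep HJ erefl) [I HI ->]]].
have [g1 g2] := (sphere_sub_Vz_normalE HNf Dab HJ).1 (fun z zS => (sub z zS).1).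
have [h1 h2] := (sphere_sub_Vz_normalE induces_nrm_conj Dab HJ).1 (fun z zS => (sub z zS).2).
apply: (bigsph_Vz_slice Hfc Dab HI); rewrite -slice_root_conjE //.
have [F20 | HV] := CA_eq0_or_star (HF2 a b Dab); last exact: nrm_stems_slice_root HV g1 g2 h1 h2.
move: g1; rewrite /nrm_stem1 F20 aconj0 amul0r subr0 => /ns F10.
by exists J => //; rewrite F10 amul0r addr0.
Qed.

Hypothesis Hreal : stem_slice_preserving S D
  (fun a b => nrm_stem1 (F1 a b) (F2 a b)) (fun a b => nrm_stem2 (F1 a b) (F2 a b)).

Lemma Vz_nrm_tame_nonsingular : nonsingular S ->
  (forall x, Omega S D x -> Nf x = Nfc x) -> bigsph S (Vz fc) = Vz Nf.
Proof.
move=> ns HNN; have VNN := eq_Vz HNN; apply/seteqP; split.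
  rewrite VNN; exact: (bigsph_Vz_sub_Vz_normal Hfc induces_nrm_conj (CA_valued_conj HF2)).
by rewrite bigsph_Vz_conj_nonsingular // -VNN setIid; exact: (Vz_normal_sub_bigsph_in HNf).
Qed.

Lemma Vz_nrm_tame : CA_valued S D F1 -> Vz Nf = bigsph S (Vz f).
Proof.
move=> HF1; apply/seteqP; split; last exact: (bigsph_Vz_sub_Vz_normal Hf HNf HF2).
by rewrite -(bigsph_in_Vz_normal Hf HNf HF2 HF1); exact: (Vz_normal_sub_bigsph_in HNf).
Qed.

End CAValuedStem2.

Lemma slice_preserving_Vz : stem_slice_preserving S D F1 F2 ->
  Vz Nf = Vz f /\ Vz f = Vz fc /\ Vz fc = Vz Nfc.
Proof.
move=> HF.
have pt x : Omega S D x -> [/\ fc x = f x, Nfc x = Nf x & Nf x = 0 <-> f x = 0].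
  case=> a [b [J [Dab [HJ ->]]]]; have [[r Er] [s Es]] := HF a b Dab.
  rewrite Hf // Hfc // HNf // HNfc // /nrm_stem1 /nrm_stem2 Er Es !aconjZ aconj1.
  rewrite !(amulZl, amulZr, amul1l, amul1r) !scalerA -scalerBl -scalerDl amulZr amul1r.
  split=> //; split=> [/(slice_eq0 HJ) [rs1 rs2] | /(slice_eq0 HJ) [-> ->]].
    by have [-> ->] := sq_complex_eq0 rs1 rs2; rewrite !scale0r addr0.
  by rewrite !(mul0r, subrr, addr0, scale0r).
split; first by apply: eq_Vz_iff => x /pt [].
split; first by apply: eq_Vz => x /pt [->].
by apply: eq_Vz_iff => x /pt [-> -> ?]; symmetry.
Qed.

End SliceFunctionZeros.

Theorem corollary4p6 (R : realType) (A : vectType R) (S : altStarAlg A)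
  (HSA : exists J, sphS S J)
  (D : R -> R -> Prop) (HDne : exists a b, D a b)
  (HDconj : forall a b, D a b -> D a (- b))
  (F1 F2 : R -> R -> A) (HF : is_stem D F1 F2)
  (f fc Nf Nfc : A -> A)
  (* f = I(F) *)
  (Hf : induces S D F1 F2 f)
  (* f^c = I(F^c) *)
  (Hfc : induces S D (fun a b => aconj S (F1 a b)) (fun a b => aconj S (F2 a b)) fc)
  (* N(f) = f . f^c = I(F F^c) *)
  (HNf : induces S D
     (fun a b => amul S (F1 a b) (aconj S (F1 a b)) - amul S (F2 a b) (aconj S (F2 a b)))
     (fun a b => amul S (F1 a b) (aconj S (F2 a b)) + amul S (F2 a b) (aconj S (F1 a b)))
     Nf)
  (* N(f^c) = f^c . f = I(F^c F) *)
  (HNfc : induces S D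
     (fun a b => amul S (aconj S (F1 a b)) (F1 a b) - amul S (aconj S (F2 a b)) (F2 a b))
     (fun a b => amul S (aconj S (F1 a b)) (F2 a b) + amul S (aconj S (F2 a b)) (F1 a b))
     Nfc) :
  let Om := Omega S D in
  let tame :=
    stem_slice_preserving S D
      (fun a b => amul S (F1 a b) (aconj S (F1 a b)) - amul S (F2 a b) (aconj S (F2 a b)))
      (fun a b => amul S (F1 a b) (aconj S (F2 a b)) + amul S (F2 a b) (aconj S (F1 a b)))
    /\ (forall x, Om x -> Nf x = Nfc x) in
  let Uf := bigsph S (Vz S D f) in
  let Ufc := bigsph S (Vz S D fc) in
  (* (1) *)
  (Vz S D f `<=` [set aconj S y | y in Vz S D Nfc])
  /\
  (* (2) *)
  ((forall x, Om x -> ~ isReal S x -> sph_der_in_CA S f x) ->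
     (forall x, Om x ->
        let P := sphere S x `&` Vz S D f in
        let Q := sphere S x `&` Vz S D fc in
        (P = set0 /\ Q = set0)
        \/ ((exists z, P = [set z]) /\ (exists z, Q = [set z]))
        \/ (P = sphere S x /\ Q = sphere S x))
     /\ (Uf `<=` Vz S D Nf /\ Uf = Ufc /\ Ufc `<=` Vz S D Nfc)
     /\ (nonsingular S ->
           Uf = Ufc /\ Ufc = bigsph_in S D (Vz S D Nf `&` Vz S D Nfc)
           /\ (tame -> Uf = Ufc /\ Ufc = Vz S D Nf /\ Vz S D Nf = Vz S D Nfc)))
  /\
  (* (3) *)
  ((forall x, Om x -> CA S (sph_val S f x)) ->
   (forall x, Om x -> ~ isReal S x -> sph_der_in_CA S f x) ->
     (bigsph_in S D (Vz S D Nf) = Uf /\ Uf = Ufc /\ Ufc = bigsph_in S D (Vz S D Nfc))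
     /\ (tame -> Vz S D Nf = Uf /\ Uf = Ufc /\ Ufc = Vz S D Nfc)
     /\ (stem_slice_preserving S D F1 F2 ->
           Vz S D Nf = Vz S D f /\ Vz S D f = Vz S D fc /\ Vz S D fc = Vz S D Nfc)).
Proof.
move=> Om tame Uf Ufc; have [J0 HJ0] := HSA.
have HNfc' := induces_nrm_conj HNfc.
split; first exact: (Vz_sub_aconj_Vz_nrm_conj Hf HNfc).
split=> [Hder | Hval Hder]; have HF2 := stem2_CA_valued Hf HF HJ0 Hder;
  have HF2c := CA_valued_conj HF2; have UfUfc : Uf = Ufc := bigsph_Vz_conj Hf Hfc HF2.
- split; first exact: (sphere_Vz_trichotomy Hf Hfc HF2).
  split; first split.
  + exact: (bigsph_Vz_sub_Vz_normal Hf HNf HF2).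
  + by split=> //; exact: (bigsph_Vz_sub_Vz_normal Hfc HNfc' HF2c).
  move=> ns; split=> //; split; first exact: (bigsph_Vz_conj_nonsingular Hfc HNf HNfc HF2 ns).
  case=> Hreal HNN; split=> //; split; last exact: eq_Vz HNN.
  exact: (Vz_nrm_tame_nonsingular Hfc HNf HNfc HF2 Hreal ns HNN).
- have HF1 := stem1_CA_valued Hf HJ0 Hval.
  split.
    split; first exact: (bigsph_in_Vz_normal Hf HNf HF2 HF1).
    split=> //; symmetry.
    exact: (bigsph_in_Vz_normal Hfc HNfc' HF2c (CA_valued_conj HF1)).
  split; last exact: (slice_preserving_Vz Hf Hfc HNf HNfc).
  case=> Hreal HNN; have NfUf : Vz S D Nf = Uf := Vz_nrm_tame Hf HNf HF2 Hreal HF1.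
  by split=> //; split=> //; rewrite -UfUfc -NfUf (eq_Vz HNN).
Qed.
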